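(* $$\sigma(3,3)+3\sigma(2,4)=15\lambda(6)-8\lambda(3)^2.$$
   Context: For integers $t\geq 1$, $n\geq 1$ let $S_n^{(t)}=\sum_{k=1}^{n}\frac{1}{(2k-1)^t}$, and for integers $s\geq 2$, $t\geq 1$ let $\sigma(s,t)=\sum_{n\geq 1}\frac{S_n^{(t)}}{n^s}$. For real $s>1$, $\lambda(s)=\sum_{n\geq 1}\frac{1}{(2n-1)^s}$. *)

From Stdlib Require Import Reals.
From Coquelicot Require Import Coquelicot.
Open Scope R_scope.

Definition S_odd (t n : nat) : R :=
  sum_n_m (fun k => / (2 * INR k - 1) ^ t) 1 n.

Definition sigma_st (s t : nat) : R :=
  Series (fun m => S_odd t (S m) / (INR (S m)) ^ s).

Definition lambda_odd (s : nat) : R :=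
  Series (fun m => / (2 * INR (S m) - 1) ^ s).

From Stdlib Require Import Reals Lra Lia.
From Coquelicot Require Import Coquelicot.
Open Scope R_scope.

(* For odd [x], [y] with [x + y = 2 n], partial fractions of [1/(x^3 y^3)] and [1/(x^2 y^4)]
   with respect to [x + y] turn the Cauchy products [lambda(3)^2] and [lambda(2) lambda(4)]
   into combinations of [sigma(5,1)], [sigma(4,2)], [sigma(3,3)], [sigma(2,4)]; eliminating
   [sigma(5,1) + sigma(4,2)] gives [sigma(3,3) + 3 sigma(2,4) = 12 lambda(2) lambda(4)
   - 8 lambda(3)^2].  It remains to show [lambda(2) lambda(4) = 5/4 lambda(6)].  For [x < y]
   odd, [1/(x^2 y^4) + 1/(y^2 x^4) = 1/(x^4 (y^2 - x^2)) - 1/(y^4 (y^2 - x^2))]; summing the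
   first term along rows and the second along columns (Tonelli) yields [H(2i+1)] and [H(2i)]
   over [4 (2i+1)^5], whose difference [1/(4 (2i+1)^6)] sums to [lambda(6)/4]. *)

(* [psum f n = f 0 + ... + f (n - 1)]; unlike [sum_n] it has an empty case. *)
Fixpoint psum (f : nat -> R) (n : nat) : R :=
  match n with O => 0 | S n => psum f n + f n end.

Lemma psum_ext f g n : (forall k, (k < n)%nat -> f k = g k) -> psum f n = psum g n.
Proof.
  induction n as [|n IH]; intros H; simpl; auto.
  rewrite IH by (intros; apply H; lia). rewrite H by lia. reflexivity.
Qed.

Lemma psum_plus f g n : psum (fun k => f k + g k) n = psum f n + psum g n.
Proof. induction n as [|n IH]; simpl; [lra | rewrite IH; lra]. Qed.

Lemma psum_scal c f n : psum (fun k => c * f k) n = c * psum f n.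
Proof. induction n as [|n IH]; simpl; [lra | rewrite IH; lra]. Qed.

Lemma psum_le f g n : (forall k, (k < n)%nat -> f k <= g k) -> psum f n <= psum g n.
Proof.
  induction n as [|n IH]; intros H; simpl; [lra|].
  assert (f n <= g n) by (apply H; lia).
  assert (psum f n <= psum g n) by (apply IH; intros; apply H; lia).
  lra.
Qed.

Lemma psum_nonneg f n : (forall k, 0 <= f k) -> 0 <= psum f n.
Proof. intros H; induction n as [|n IH]; simpl; [lra | specialize (H n); lra]. Qed.

Lemma psum_incr f n m : (forall k, 0 <= f k) -> (n <= m)%nat -> psum f n <= psum f m.
Proof. intros H Hnm; induction Hnm; simpl; [lra | specialize (H m); lra]. Qed.

Lemma psum_Sl f n : psum f (S n) = f O + psum (fun j => f (S j)) n.
Proof. induction n as [|n IH]; simpl in *; [lra | rewrite IH; lra]. Qed.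

Lemma psum_add f n m : psum f (n + m) = psum f n + psum (fun j => f (n + j)%nat) m.
Proof.
  induction m as [|m IH]; simpl; [rewrite Nat.add_0_r; lra|].
  rewrite Nat.add_succ_r; simpl; rewrite IH; lra.
Qed.

Lemma psum_reflect f n : psum (fun k => f (n - k)%nat) (S n) = psum f (S n).
Proof.
  induction n as [|n IH]; [reflexivity|].
  rewrite psum_Sl. replace (S n - 0)%nat with (S n) by lia.
  rewrite (psum_ext _ (fun k => f (n - k)%nat)) by (intros; f_equal; lia).
  rewrite IH. simpl. lra.
Qed.

Lemma psum_sum_n f n : psum f (S n) = sum_n f n.
Proof.
  induction n as [|n IH]; [simpl; rewrite sum_O; lra|].
  rewrite sum_Sn; simpl psum; simpl in IH; rewrite <- IH. reflexivity.
Qed.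

Lemma is_series_psum a l : is_series a l <-> is_lim_seq (psum a) l.
Proof.
  split; intro H.
  - apply is_lim_seq_incr_1. eapply is_lim_seq_ext; [|exact H].
    intros n; rewrite psum_sum_n; reflexivity.
  - apply is_lim_seq_incr_1 in H. eapply is_lim_seq_ext in H; [exact H|].
    intros n; rewrite <- psum_sum_n; reflexivity.
Qed.

Lemma is_lim_seq_psum (u : nat -> nat -> R) (l : nat -> R) n :
  (forall j, is_lim_seq (u j) (l j)) ->
  is_lim_seq (fun K => psum (fun j => u j K) n) (psum l n).
Proof.
  intros H; induction n as [|n IH]; simpl.
  - apply is_lim_seq_const.
  - apply is_lim_seq_plus'; auto.
Qed.

Lemma ex_series_nonneg_bounded a M :
  (forall n, 0 <= a n) -> (forall n, psum a n <= M) -> ex_series a.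
Proof.
  intros H0 HM.
  assert (E : ex_finite_lim_seq (psum a)).
  { apply ex_finite_lim_seq_incr with M; auto.
    intros n; simpl; specialize (H0 n); lra. }
  destruct E as [l Hl]. exists l. apply is_series_psum. exact Hl.
Qed.

Lemma ex_series_nonneg_le a b : (forall n, 0 <= a n <= b n) -> ex_series b -> ex_series a.
Proof.
  intros Hab Hb. apply (@ex_series_le R_AbsRing R_CompleteNormedModule a b); auto.
  intros n. change (norm (a n)) with (Rabs (a n)). rewrite Rabs_pos_eq; apply Hab.
Qed.

Lemma psum_le_series a l n : (forall k, 0 <= a k) -> is_series a l -> psum a n <= l.
Proof.
  intros H0 H. apply is_series_psum in H. apply (is_lim_seq_incr_n _ n) in H.
  apply (is_lim_seq_le (fun _ => psum a n) _ _ _) with (2 := is_lim_seq_const _) (3 := H).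
  intros m. apply psum_incr; auto; lia.
Qed.

Lemma is_series_tail a l n :
  is_series a l -> is_series (fun k => a (n + k)%nat) (l - psum a n).
Proof.
  intros H. apply is_series_psum in H. apply is_series_psum.
  apply (is_lim_seq_incr_n _ n) in H.
  eapply is_lim_seq_ext; [|apply (is_lim_seq_minus' _ _ _ _ H (is_lim_seq_const (psum a n)))].
  intros m; simpl. rewrite Nat.add_comm, psum_add. lra.
Qed.

Lemma is_series_decr_1_zero a l : a O = 0 -> is_series (fun i => a (S i)) l -> is_series a l.
Proof.
  intros H0 H. apply is_series_psum in H. apply is_series_psum, is_lim_seq_incr_1.
  eapply is_lim_seq_ext; [|exact H]. intros n. rewrite psum_Sl, H0. lra.
Qed.

(* Coquelicot states these over an abstract normed module, whose [plus]/[scal] do not unify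
   syntactically with [Rplus]/[Rmult]; the real instances below do. *)
Lemma is_series_Rscal c a l : is_series a l -> is_series (fun n => c * a n) (c * l).
Proof. exact (is_series_scal_l c a l). Qed.

Lemma is_series_Rext (a b : nat -> R) l : (forall n, a n = b n) -> is_series a l -> is_series b l.
Proof. exact (is_series_ext a b l). Qed.

Lemma is_series_Rplus (a b : nat -> R) la lb :
  is_series a la -> is_series b lb -> is_series (fun n => a n + b n) (la + lb).
Proof. exact (is_series_plus a b la lb). Qed.

Lemma is_series_Rminus (a b : nat -> R) la lb :
  is_series a la -> is_series b lb -> is_series (fun n => a n - b n) (la - lb).
Proof. exact (is_series_minus a b la lb). Qed.

Lemma psum_diagonals (h : nat -> nat -> R) n :
  psum (fun i => psum (fun j => h j (i - j)%nat) (S i)) n =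
  psum (fun j => psum (h j) (n - j)%nat) n.
Proof.
  induction n as [|n IH]; [reflexivity|].
  change (psum ?F (S n) = ?G) with (psum F n + F n = G). rewrite IH.
  rewrite (psum_ext (fun j => psum (h j) (S n - j)%nat)
             (fun j => psum (h j) (n - j)%nat + h j (n - j)%nat))
    by (intros k Hk; replace (S n - k)%nat with (S (n - k)) by lia; reflexivity).
  rewrite psum_plus. simpl psum. replace (n - n)%nat with O by lia. simpl. lra.
Qed.

Lemma is_series_diagonals (h : nat -> nat -> R) :
  (forall j d, 0 <= h j d) -> (forall j, ex_series (h j)) ->
  ex_series (fun j => Series (h j)) ->
  is_series (fun i => psum (fun j => h j (i - j)%nat) (S i)) (Series (fun j => Series (h j))).
Proof.
  intros H0 Hrow Hsum.
  set (L := Series (fun j => Series (h j))).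
  set (d := fun i => psum (fun j => h j (i - j)%nat) (S i)).
  assert (Hd0 : forall i, 0 <= d i) by (intros; apply psum_nonneg; auto).
  assert (Hrow_le : forall j n, psum (h j) n <= Series (h j))
    by (intros; apply psum_le_series, Series_correct; auto).
  assert (Hup : forall n, psum d n <= L).
  { intros n. unfold d. rewrite psum_diagonals.
    apply Rle_trans with (psum (fun j => Series (h j)) n).
    - apply psum_le. intros; apply Hrow_le.
    - apply psum_le_series, Series_correct; auto.
      intros j. apply Rle_trans with (psum (h j) 0); [simpl; lra | apply Hrow_le]. }
  destruct (ex_series_nonneg_bounded d L Hd0 Hup) as [L' HL'].
  assert (HL'L : L' <= L).
  { apply is_series_psum in HL'.
    apply (is_lim_seq_le _ (fun _ => L) _ _ Hup HL' (is_lim_seq_const L)). }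
  assert (HLL' : L <= L').
  { assert (Hcol : forall n, psum (fun j => Series (h j)) n <= L').
    { intros n.
      assert (Hlim := is_lim_seq_psum (fun j K => psum (h j) K) (fun j => Series (h j)) n
                        (fun j => proj1 (is_series_psum _ _) (Series_correct _ (Hrow j)))).
      apply (is_lim_seq_le _ (fun _ => L') _ _) with (2 := Hlim) (3 := is_lim_seq_const L').
      intros K. apply Rle_trans with (psum d (n + K)); [|apply psum_le_series; auto].
      unfold d. rewrite psum_diagonals.
      apply Rle_trans with (psum (fun j => psum (h j) (n + K - j)%nat) n).
      + apply psum_le. intros k Hk. apply psum_incr; auto; lia.
      + apply psum_incr; [intros; apply psum_nonneg; auto | lia]. }
    assert (HS := proj1 (is_series_psum _ _) (Series_correct _ Hsum)).
    apply (is_lim_seq_le _ (fun _ => L') _ _ Hcol HS (is_lim_seq_const L')). }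
  replace L with L' by lra. exact HL'.
Qed.

(* Row [i] of the strictly upper triangular part of [f] is indexed by [d], with [j = S i + d]. *)
Lemma is_series_upper_columns (f : nat -> nat -> R) :
  (forall i d, 0 <= f i (S i + d)%nat) ->
  (forall i, ex_series (fun d => f i (S i + d)%nat)) ->
  ex_series (fun i => Series (fun d => f i (S i + d)%nat)) ->
  is_series (fun j => psum (fun i => f i j) j)
    (Series (fun i => Series (fun d => f i (S i + d)%nat))).
Proof.
  intros H0 Hrow Hsum.
  apply is_series_decr_1_zero; [reflexivity|].
  eapply is_series_ext; [|exact (is_series_diagonals (fun i d => f i (S i + d)%nat) H0 Hrow Hsum)].
  intros n. apply psum_ext. intros j Hj. f_equal. lia.
Qed.

Definition oddR (i : nat) : R := 2 * INR i + 1.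

Lemma oddR_ge1 i : 1 <= oddR i.
Proof. unfold oddR; generalize (pos_INR i); lra. Qed.

Lemma oddR_gt0 i : 0 < oddR i.
Proof. generalize (oddR_ge1 i); lra. Qed.

Lemma inv_oddR_pow_gt0 i s : 0 < / oddR i ^ s.
Proof. apply Rinv_0_lt_compat, pow_lt, oddR_gt0. Qed.

Lemma oddR_add_reflect n k : (k <= n)%nat -> oddR k + oddR (n - k) = 2 * INR (S n).
Proof. intros; unfold oddR; rewrite minus_INR, S_INR by auto; lra. Qed.

Lemma psum_inv_telescope n :
  psum (fun i => 2 * (/ (INR i + 1) - / (INR i + 2))) n = 2 - 2 / (INR n + 1).
Proof.
  induction n as [|n IH]; simpl psum; [simpl; field|].
  rewrite IH, S_INR. field. split; generalize (pos_INR n); lra.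
Qed.

Lemma ex_series_inv_oddR_pow s : (2 <= s)%nat -> ex_series (fun i => / oddR i ^ s).
Proof.
  intros Hs. apply (ex_series_nonneg_bounded _ 2); [intros; left; apply inv_oddR_pow_gt0|].
  intros n. apply Rle_trans with (psum (fun i => 2 * (/ (INR i + 1) - / (INR i + 2))) n).
  - apply psum_le. intros i _. generalize (pos_INR i); intros Hi.
    apply Rle_trans with (/ oddR i ^ 2).
    + apply Rinv_le_contravar; [apply pow_lt, oddR_gt0|].
      apply Rle_pow; auto. apply oddR_ge1.
    + replace (2 * (/ (INR i + 1) - / (INR i + 2))) with (/ ((INR i + 1) * (INR i + 2) / 2))
        by (field; lra).
      apply Rinv_le_contravar; unfold oddR; simpl; nra.
  - rewrite psum_inv_telescope.
    assert (0 < 2 / (INR n + 1)) by (generalize (pos_INR n); intro; apply Rdiv_lt_0_compat; lra).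
    lra.
Qed.

Lemma is_series_lambda_odd s : (2 <= s)%nat -> is_series (fun i => / oddR i ^ s) (lambda_odd s).
Proof.
  intros Hs. unfold lambda_odd.
  rewrite (Series_ext _ (fun i => / oddR i ^ s))
    by (intros; unfold oddR; rewrite S_INR; do 2 f_equal; lra).
  apply Series_correct, ex_series_inv_oddR_pow; auto.
Qed.

Lemma psum_inv_oddR_pow_le s n : (2 <= s)%nat -> psum (fun k => / oddR k ^ s) n <= lambda_odd s.
Proof.
  intros Hs. apply psum_le_series; [intros; left; apply inv_oddR_pow_gt0|].
  apply is_series_lambda_odd; auto.
Qed.

Definition sigma_term (s t m : nat) : R := S_odd t (S m) / INR (S m) ^ s.

Lemma sigma_st_Series s t : sigma_st s t = Series (sigma_term s t).
Proof. reflexivity. Qed.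

Lemma S_odd_psum t n : S_odd t (S n) = psum (fun k => / oddR k ^ t) (S n).
Proof.
  unfold S_odd. rewrite <- sum_n_m_S, psum_sum_n.
  apply sum_n_m_ext. intros k. unfold oddR; rewrite S_INR. do 2 f_equal. lra.
Qed.

Lemma sigma_term_nonneg s t n : 0 <= sigma_term s t n.
Proof.
  unfold sigma_term. rewrite S_odd_psum. apply Rmult_le_pos.
  - apply psum_nonneg. intros; left; apply inv_oddR_pow_gt0.
  - left. apply Rinv_0_lt_compat, pow_lt, lt_0_INR. lia.
Qed.

(* The exponent [^ 1] is kept so that the sums below match [/ oddR k ^ t] at [t = 1]. *)
Lemma partial_fractions_3_3 x y : 0 < x -> 0 < y -> / x ^ 3 * / y ^ 3 =
  (6 * / (x + y) ^ 5 * / x ^ 1 + 3 * / (x + y) ^ 4 * / x ^ 2 + / (x + y) ^ 3 * / x ^ 3) +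
  (6 * / (x + y) ^ 5 * / y ^ 1 + 3 * / (x + y) ^ 4 * / y ^ 2 + / (x + y) ^ 3 * / y ^ 3).
Proof. intros. field. lra. Qed.

Lemma partial_fractions_2_4 x y : 0 < x -> 0 < y -> / x ^ 2 * / y ^ 4 =
  (4 * / (x + y) ^ 5 * / x ^ 1 + / (x + y) ^ 4 * / x ^ 2) +
  (4 * / (x + y) ^ 5 * / y ^ 1 + 3 * / (x + y) ^ 4 * / y ^ 2 + 2 * / (x + y) ^ 3 * / y ^ 3
     + / (x + y) ^ 2 * / y ^ 4).
Proof. intros. field. lra. Qed.

Lemma cauchy_term_3_3 n :
  sum_f_R0 (fun k => / oddR k ^ 3 * / oddR (n - k) ^ 3) n =
  3/8 * sigma_term 5 1 n + 3/8 * sigma_term 4 2 n + 1/4 * sigma_term 3 3 n.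
Proof.
  set (N := 2 * INR (S n)).
  set (F := fun z => 6 * / N ^ 5 * / z ^ 1 + 3 * / N ^ 4 * / z ^ 2 + / N ^ 3 * / z ^ 3).
  rewrite <- sum_n_Reals, <- psum_sum_n.
  rewrite (psum_ext _ (fun k => F (oddR k) + F (oddR (n - k)))).
  2:{ intros k Hk. unfold F, N. rewrite <- (oddR_add_reflect n k) by lia.
      apply partial_fractions_3_3; apply oddR_gt0. }
  rewrite psum_plus, (psum_reflect (fun k => F (oddR k))).
  unfold F, sigma_term. rewrite !S_odd_psum, !psum_plus, !psum_scal.
  unfold N. field. apply not_0_INR. lia.
Qed.

Lemma cauchy_term_2_4 n :
  sum_f_R0 (fun k => / oddR k ^ 2 * / oddR (n - k) ^ 4) n =
  1/4 * sigma_term 5 1 n + 1/4 * sigma_term 4 2 n + 1/4 * sigma_term 3 3 n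
    + 1/4 * sigma_term 2 4 n.
Proof.
  set (N := 2 * INR (S n)).
  set (F := fun z => 4 * / N ^ 5 * / z ^ 1 + / N ^ 4 * / z ^ 2).
  set (G := fun z => 4 * / N ^ 5 * / z ^ 1 + 3 * / N ^ 4 * / z ^ 2 + 2 * / N ^ 3 * / z ^ 3
                     + / N ^ 2 * / z ^ 4).
  rewrite <- sum_n_Reals, <- psum_sum_n.
  rewrite (psum_ext _ (fun k => F (oddR k) + G (oddR (n - k)))).
  2:{ intros k Hk. unfold F, G, N. rewrite <- (oddR_add_reflect n k) by lia.
      apply partial_fractions_2_4; apply oddR_gt0. }
  rewrite psum_plus, (psum_reflect (fun k => G (oddR k))).
  unfold F, G, sigma_term. rewrite !S_odd_psum, !psum_plus, !psum_scal.
  unfold N. field. apply not_0_INR. lia.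
Qed.

Lemma is_series_cauchy_lambda_odd a b : (2 <= a)%nat -> (2 <= b)%nat ->
  is_series (fun n => sum_f_R0 (fun k => / oddR k ^ a * / oddR (n - k) ^ b) n)
    (lambda_odd a * lambda_odd b).
Proof.
  assert (Habs : forall s, (2 <= s)%nat -> ex_series (fun i => Rabs (/ oddR i ^ s))).
  { intros s Hs. eapply ex_series_ext; [|apply ex_series_inv_oddR_pow; eauto].
    intros n. rewrite Rabs_pos_eq; auto. left; apply inv_oddR_pow_gt0. }
  intros. apply (is_series_mult (fun k => / oddR k ^ a) (fun k => / oddR k ^ b));
    auto; apply is_series_lambda_odd; auto.
Qed.

Definition harmonic (K : nat) : R := psum (fun k => / (INR k + 1)) K.

Lemma harmonic_nonneg K : 0 <= harmonic K.
Proof. apply psum_nonneg. intros k; left; apply Rinv_0_lt_compat; generalize (pos_INR k); lra. Qed.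

Lemma harmonic_le K : harmonic K <= INR K.
Proof.
  induction K as [|K IH]; unfold harmonic in *; simpl psum; [simpl; lra|].
  rewrite S_INR. assert (/ (INR K + 1) <= 1).
  { rewrite <- Rinv_1. apply Rinv_le_contravar; [lra|]. generalize (pos_INR K); lra. }
  lra.
Qed.

Lemma psum_harmonic_shift_le n K :
  psum (fun j => / (INR (n + j) + 1)) K <= INR K * / (INR n + 1).
Proof.
  induction K as [|K IH]; simpl psum; [simpl; lra|].
  rewrite S_INR. assert (/ (INR (n + K) + 1) <= / (INR n + 1)).
  { apply Rinv_le_contravar; [generalize (pos_INR n); lra|].
    rewrite plus_INR. generalize (pos_INR K); lra. }
  lra.
Qed.

Lemma is_series_harmonic_telescope K :
  is_series (fun d => / (INR d + 1) - / (INR d + 1 + INR K)) (harmonic K).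
Proof.
  apply is_series_psum.
  assert (Hpsum : forall n, psum (fun d => / (INR d + 1) - / (INR d + 1 + INR K)) n =
                             harmonic K - psum (fun j => / (INR (n + j) + 1)) K).
  { intros n.
    assert (E1 := psum_add (fun k => / (INR k + 1)) K n).
    assert (E2 := psum_add (fun k => / (INR k + 1)) n K).
    rewrite Nat.add_comm in E2. fold (harmonic (K + n)) (harmonic K) (harmonic n) in E1, E2.
    replace (psum (fun d => / (INR d + 1) - / (INR d + 1 + INR K)) n) with
      (harmonic n + -1 * psum (fun j => / (INR (K + j) + 1)) n); [lra|].
    rewrite <- psum_scal. unfold harmonic. rewrite <- psum_plus. apply psum_ext. intros k _.
    rewrite plus_INR. replace (INR k + 1 + INR K) with (INR K + INR k + 1) by lra. lra. }
  eapply is_lim_seq_ext; [intros n; symmetry; apply Hpsum|].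
  replace (Finite (harmonic K)) with (Rbar_minus (harmonic K) 0) by (simpl; f_equal; ring).
  apply is_lim_seq_minus'; [apply is_lim_seq_const|].
  apply is_lim_seq_le_le with (u := fun _ => 0) (w := fun n => INR K * / (INR n + 1)).
  - intros n; split; [|apply psum_harmonic_shift_le].
    apply psum_nonneg; intros; left; apply Rinv_0_lt_compat; generalize (pos_INR (n + k)); lra.
  - apply is_lim_seq_const.
  - replace (Finite 0) with (Rbar_mult (INR K) 0) by (simpl; f_equal; ring).
    apply is_lim_seq_scal_l.
    replace (Finite 0) with (Rbar_inv p_infty) by reflexivity.
    apply is_lim_seq_inv; [|discriminate].
    eapply is_lim_seq_ext; [|exact (proj1 (is_lim_seq_incr_1 _ _) is_lim_seq_INR)].
    intros n; apply S_INR.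
Qed.

Definition g24 (i j : nat) : R := / oddR i ^ 2 * / oddR j ^ 4.
Definition gap (i j : nat) : R := oddR j ^ 2 - oddR i ^ 2.
Definition frac_row (i j : nat) : R := / (oddR i ^ 4 * gap i j).
Definition frac_col (i j : nat) : R := / (oddR j ^ 4 * gap i j).

Lemma oddR_upper i d : oddR (S i + d) = oddR i + 2 * INR (S d).
Proof. unfold oddR. rewrite plus_INR, !S_INR. lra. Qed.

Lemma gap_upper_gt0 i d : 0 < gap i (S i + d).
Proof.
  unfold gap. rewrite oddR_upper. generalize (oddR_gt0 i) (pos_INR d); rewrite S_INR; nra.
Qed.

Lemma frac_col_upper_gt0 i d : 0 < frac_col i (S i + d).
Proof.
  apply Rinv_0_lt_compat, Rmult_lt_0_compat; [apply pow_lt, oddR_gt0 | apply gap_upper_gt0].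
Qed.

(* With [x = oddR i < y = oddR j], both sides equal [(y^4 - x^4) / (x^4 y^4 (y^2 - x^2))]. *)
Lemma g24_sym_upper i d :
  g24 i (S i + d) + g24 (S i + d) i = frac_row i (S i + d) - frac_col i (S i + d).
Proof.
  assert (Hgap := gap_upper_gt0 i d).
  unfold g24, frac_row, frac_col, gap in *. rewrite oddR_upper in *.
  generalize (oddR_gt0 i) (pos_INR d); rewrite S_INR; intros.
  field. repeat split; nra.
Qed.

Definition frac_row_sum (i : nat) : R := harmonic (S (i + i)) / (4 * oddR i ^ 5).
Definition frac_col_sum (j : nat) : R := harmonic (j + j) / (4 * oddR j ^ 5).

Lemma INR_oddR i : INR (S (i + i)) = oddR i.
Proof. unfold oddR. rewrite S_INR, plus_INR. lra. Qed.

(* Since [gap i j = 4 (d + 1) (d + 1 + oddR i)] for [j = S i + d], the row telescopes. *)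
Lemma is_series_frac_row i : is_series (fun d => frac_row i (S i + d)) (frac_row_sum i).
Proof.
  assert (T := is_series_Rscal (/ (4 * oddR i ^ 5)) _ _
                 (is_series_harmonic_telescope (S (i + i)))).
  unfold frac_row_sum, Rdiv. rewrite Rmult_comm. refine (is_series_Rext _ _ _ _ T).
  intros d. unfold frac_row, gap. rewrite oddR_upper, INR_oddR, S_INR.
  generalize (oddR_gt0 i) (pos_INR d); intros.
  field. repeat split; nra.
Qed.

(* For [i < j]: [gap i j = 4 (j - i) (j + i + 1)] and [j - i + (j + i + 1) = oddR j]. *)
Lemma psum_frac_col j : psum (fun i => frac_col i j) j = frac_col_sum j.
Proof.
  rewrite (psum_ext _ (fun i => / (4 * oddR j ^ 5)
                                * (/ (INR j - INR i) + / (INR j + INR i + 1)))).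
  - rewrite psum_scal, psum_plus. unfold frac_col_sum.
    replace (psum (fun i => / (INR j - INR i)) j) with (harmonic j).
    2:{ destruct j as [|j]; [reflexivity|]. rewrite <- psum_reflect. apply psum_ext.
        intros k Hk. rewrite minus_INR by lia. rewrite !S_INR. f_equal. lra. }
    replace (psum (fun i => / (INR j + INR i + 1)) j) with (harmonic (j + j) - harmonic j).
    2:{ unfold harmonic. rewrite psum_add.
        rewrite (psum_ext (fun i => / (INR (j + i) + 1)) (fun i => / (INR j + INR i + 1)))
          by (intros; rewrite plus_INR; reflexivity).
        lra. }
    field. generalize (oddR_gt0 j); lra.
  - intros i Hi. unfold frac_col, gap, oddR. apply lt_INR in Hi. generalize (pos_INR i); intros.
    field. repeat split; nra.
Qed.

Lemma frac_row_sum_sub_frac_col_sum i : frac_row_sum i - frac_col_sum i = / 4 * / oddR i ^ 6.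
Proof.
  unfold frac_row_sum, frac_col_sum, harmonic. simpl psum. rewrite plus_INR.
  unfold oddR. generalize (pos_INR i); intros. field. lra.
Qed.

Lemma frac_row_sum_bounds i : 0 <= frac_row_sum i <= / 4 * / oddR i ^ 4.
Proof.
  unfold frac_row_sum. assert (Hle := harmonic_le (S (i + i))). rewrite INR_oddR in Hle.
  assert (Hi := oddR_gt0 i). assert (H5 : 0 < / (4 * oddR i ^ 5)).
  { apply Rinv_0_lt_compat, Rmult_lt_0_compat; [lra | apply pow_lt; lra]. }
  split; [apply Rmult_le_pos; [apply harmonic_nonneg | lra]|].
  apply Rle_trans with (oddR i / (4 * oddR i ^ 5)).
  - apply Rmult_le_compat_r; lra.
  - right. field. lra.
Qed.

Lemma ex_series_frac_row_sum : ex_series frac_row_sum.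
Proof.
  apply (ex_series_nonneg_le _ (fun i => / 4 * / oddR i ^ 4)); [apply frac_row_sum_bounds|].
  destruct (ex_series_inv_oddR_pow 4 ltac:(lia)) as [l Hl].
  exists (/ 4 * l). exact (is_series_Rscal _ _ _ Hl).
Qed.

Definition g24_col_tail (j : nat) : R :=
  / oddR j ^ 4 * (lambda_odd 2 - psum (fun k => / oddR k ^ 2) (S j)).

Lemma is_series_g24_col_tail j : is_series (fun d => g24 (S j + d) j) (g24_col_tail j).
Proof.
  assert (T := is_series_Rscal (/ oddR j ^ 4) _ _
                 (is_series_tail _ _ (S j) (is_series_lambda_odd 2 ltac:(lia)))).
  refine (is_series_Rext _ _ _ _ T). intros d. unfold g24. ring.
Qed.

Lemma g24_col_tail_bounds j : 0 <= g24_col_tail j <= lambda_odd 2 * / oddR j ^ 4.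
Proof.
  unfold g24_col_tail. assert (H4 := inv_oddR_pow_gt0 j 4).
  assert (Hle := psum_inv_oddR_pow_le 2 (S j) ltac:(lia)).
  assert (0 <= psum (fun k => / oddR k ^ 2) (S j))
    by (apply psum_nonneg; intros; left; apply inv_oddR_pow_gt0).
  split; nra.
Qed.

Lemma ex_series_g24_col_tail : ex_series g24_col_tail.
Proof.
  apply (ex_series_nonneg_le _ (fun j => lambda_odd 2 * / oddR j ^ 4));
    [apply g24_col_tail_bounds|].
  exists (lambda_odd 2 * lambda_odd 4).
  exact (is_series_Rscal _ _ _ (is_series_lambda_odd 4 ltac:(lia))).
Qed.

Lemma is_series_psum_g24_lower : is_series (fun i => psum (g24 i) i) (Series g24_col_tail).
Proof.
  assert (Hrow := is_series_g24_col_tail).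
  assert (T := is_series_upper_columns (fun j i => g24 i j)
                 ltac:(intros; left; apply Rmult_lt_0_compat; apply inv_oddR_pow_gt0)
                 (fun j => ex_intro _ _ (Hrow j))
                 ltac:(eapply ex_series_ext; [|exact ex_series_g24_col_tail];
                       intros j; symmetry; apply is_series_unique, Hrow)).
  rewrite (Series_ext _ g24_col_tail) in T by (intros j; apply is_series_unique, Hrow).
  exact T.
Qed.

Definition g24_row_tail (i : nat) : R :=
  / oddR i ^ 2 * lambda_odd 4 - psum (g24 i) i - / oddR i ^ 6.

Lemma is_series_g24_row_tail i : is_series (fun d => g24 i (S i + d)) (g24_row_tail i).
Proof.
  assert (T := is_series_tail _ _ (S i)
                 (is_series_Rscal (/ oddR i ^ 2) _ _ (is_series_lambda_odd 4 ltac:(lia)))).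
  replace (g24_row_tail i) with (/ oddR i ^ 2 * lambda_odd 4 - psum (g24 i) (S i)); [exact T|].
  unfold g24_row_tail. simpl psum. unfold g24. generalize (oddR_gt0 i); intros. field. lra.
Qed.

Lemma is_series_g24_row_tail_sum :
  is_series g24_row_tail (lambda_odd 2 * lambda_odd 4 - Series g24_col_tail - lambda_odd 6).
Proof.
  apply is_series_Rminus; [apply is_series_Rminus|].
  - rewrite Rmult_comm.
    apply (is_series_Rext _ _ _ (fun i => Rmult_comm _ _)), is_series_Rscal.
    apply is_series_lambda_odd; lia.
  - exact is_series_psum_g24_lower.
  - apply is_series_lambda_odd; lia.
Qed.

Lemma is_series_frac_col_by_rows i :
  is_series (fun d => frac_col i (S i + d)) (frac_row_sum i - g24_col_tail i - g24_row_tail i).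
Proof.
  assert (T := is_series_Rminus _ _ _ _ (is_series_frac_row i)
                 (is_series_Rplus _ _ _ _ (is_series_g24_col_tail i) (is_series_g24_row_tail i))).
  refine (is_series_Rext _ _ _ _ _).
  2:{ replace (frac_row_sum i - g24_col_tail i - g24_row_tail i)
        with (frac_row_sum i - (g24_col_tail i + g24_row_tail i)) by ring. exact T. }
  intros d. cbv beta. rewrite (Rplus_comm (g24 _ _)), g24_sym_upper. ring.
Qed.

Lemma lambda_odd_2_4 : lambda_odd 2 * lambda_odd 4 = 5 / 4 * lambda_odd 6.
Proof.
  assert (Hrows : is_series (fun i => frac_row_sum i - g24_col_tail i - g24_row_tail i)
                    (Series frac_row_sum - Series g24_col_tail
                     - (lambda_odd 2 * lambda_odd 4 - Series g24_col_tail - lambda_odd 6))).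
  { apply is_series_Rminus; [apply is_series_Rminus|];
      [apply Series_correct, ex_series_frac_row_sum | apply Series_correct, ex_series_g24_col_tail
      | exact is_series_g24_row_tail_sum]. }
  assert (Hcols := is_series_upper_columns frac_col ltac:(intros; left; apply frac_col_upper_gt0)
                     (fun i => ex_intro _ _ (is_series_frac_col_by_rows i))
                     (ex_intro _ _ (is_series_Rext _ _ _
                        (fun i => eq_sym (is_series_unique _ _ (is_series_frac_col_by_rows i)))
                        Hrows))).
  rewrite (Series_ext _ _ (fun i => is_series_unique _ _ (is_series_frac_col_by_rows i))),
    (is_series_unique _ _ Hrows) in Hcols.
  apply (is_series_Rext _ frac_col_sum) in Hcols; [|exact psum_frac_col].
  assert (Hdiff := is_series_Rminus _ _ _ _ (Series_correct _ ex_series_frac_row_sum) Hcols).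
  apply (is_series_Rext _ (fun i => / 4 * / oddR i ^ 6)) in Hdiff;
    [|intros i; apply frac_row_sum_sub_frac_col_sum].
  assert (H6 := is_series_Rscal (/ 4) _ _ (is_series_lambda_odd 6 ltac:(lia))).
  assert (E := is_series_unique _ _ Hdiff). rewrite (is_series_unique _ _ H6) in E.
  lra.
Qed.

(* Each of the four nonnegative series is dominated by 4 times a convergent Cauchy product. *)
Lemma ex_series_sigma_terms :
  ex_series (sigma_term 5 1) /\ ex_series (sigma_term 4 2) /\
  ex_series (sigma_term 3 3) /\ ex_series (sigma_term 2 4).
Proof.
  assert (Hsum := ex_intro _ _ (is_series_Rscal 4 _ _
                    (is_series_Rext _ _ _ cauchy_term_2_4
                       (is_series_cauchy_lambda_odd 2 4 ltac:(lia) ltac:(lia))))).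
  assert (H0 := sigma_term_nonneg).
  repeat split; refine (ex_series_nonneg_le _ _ _ Hsum); intros n; split; try apply H0;
    generalize (H0 5%nat 1%nat n) (H0 4%nat 2%nat n) (H0 3%nat 3%nat n) (H0 2%nat 4%nat n); lra.
Qed.

Lemma lambda_odd_3_sqr_sigma :
  lambda_odd 3 * lambda_odd 3 =
  3/8 * Series (sigma_term 5 1) + 3/8 * Series (sigma_term 4 2) + 1/4 * Series (sigma_term 3 3).
Proof.
  destruct ex_series_sigma_terms as (E51 & E42 & E33 & _).
  apply Series_correct in E51, E42, E33.
  transitivity (Series (fun n => 3/8 * sigma_term 5 1 n + 3/8 * sigma_term 4 2 n
                                 + 1/4 * sigma_term 3 3 n)).
  - symmetry. apply is_series_unique, (is_series_Rext _ _ _ cauchy_term_3_3).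
    apply is_series_cauchy_lambda_odd; lia.
  - apply is_series_unique, is_series_Rplus; [apply is_series_Rplus|];
      apply is_series_Rscal; assumption.
Qed.

Lemma lambda_odd_2_4_sigma :
  lambda_odd 2 * lambda_odd 4 =
  1/4 * Series (sigma_term 5 1) + 1/4 * Series (sigma_term 4 2) + 1/4 * Series (sigma_term 3 3)
  + 1/4 * Series (sigma_term 2 4).
Proof.
  destruct ex_series_sigma_terms as (E51 & E42 & E33 & E24).
  apply Series_correct in E51, E42, E33, E24.
  transitivity (Series (fun n => 1/4 * sigma_term 5 1 n + 1/4 * sigma_term 4 2 n
                                 + 1/4 * sigma_term 3 3 n + 1/4 * sigma_term 2 4 n)).
  - symmetry. apply is_series_unique, (is_series_Rext _ _ _ cauchy_term_2_4).
    apply is_series_cauchy_lambda_odd; lia.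
  - apply is_series_unique, is_series_Rplus; [apply is_series_Rplus; [apply is_series_Rplus|]|];
      apply is_series_Rscal; assumption.
Qed.

Theorem mainTheorem19 :
  sigma_st 3 3 + 3 * sigma_st 2 4 = 15 * lambda_odd 6 - 8 * (lambda_odd 3) ^ 2.
Proof.
  assert (H33 := lambda_odd_3_sqr_sigma).
  assert (H24 := lambda_odd_2_4_sigma).
  rewrite lambda_odd_2_4 in H24.
  rewrite !sigma_st_Series. simpl. lra.
Qed.
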